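(* Let $G=(m,n,\boldsymbol{c},\boldsymbol{d},r_{\max},r_{\min})$ be an interbank lending game, let $g(\boldsymbol{s})=(\nabla_1u_1(\boldsymbol{s}),\dots,\nabla_mu_m(\boldsymbol{s}))\in\mathbb{R}^{mn}$ be its $\boldsymbol{1}$-pseudo-gradient, and let $\nabla g(\boldsymbol{s})$ be the $mn\times mn$ Jacobian matrix of $g$ at $\boldsymbol{s}$. Then for every strategy profile $\boldsymbol{s}$, the matrix $\nabla g(\boldsymbol{s})+(\nabla g(\boldsymbol{s}))^\top$ is negative definite.
   Context: An interbank lending game $G=(m,n,\boldsymbol{c},\boldsymbol{d},r_{\max},r_{\min})$ consists of positive integers $m,n$, budgets $\boldsymbol{c}\in\mathbb{R}_{>0}^m$, demands $\boldsymbol{d}\in\mathbb{R}_{>0}^n$ and reals $0<r_{\min}<r_{\max}$. Lenders are $L=\{1,\dots,m\}$, borrowers $B=\{1,\dots,n\}$. Lender $i$'s strategy set is $S_i=\{s_i\in\mathbb{R}_{\ge0}^n:\sum_{j\in B}s_{ij}\le c_i\}$, the strategy space is $\boldsymbol{S}=\prod_{i\in L}S_i$ with elements $\boldsymbol{s}=(s_{ij})_{i\in L,j\in B}$, $s_i=(s_{i1},\dots,s_{in})$. The interest rate of borrower $j$ is $r_j(\boldsymbol{s})=(r_{\min}-r_{\max})\frac{\sum_{i\in L}s_{ij}}{d_j}+r_{\max}$ and lender $i$'s utility is $u_i(\boldsymbol{s})=\sum_{j\in B}(r_j(\boldsymbol{s})-r_{\min})s_{ij}$ (a polynomial in $\boldsymbol{s}$).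 $\nabla_iu_i(\boldsymbol{s})\in\mathbb{R}^n$ denotes the gradient of $u_i$ with respect to lender $i$'s own variables $s_i$. *)

From HB Require Import structures.
From mathcomp Require Import all_boot all_order all_algebra.
From mathcomp Require Import all_classical all_reals all_analysis.
Set Implicit Arguments. Unset Strict Implicit. Unset Printing Implicit Defensive.
Import Order.TTheory GRing.Theory Num.Theory.
Import numFieldNormedType.Exports.
Local Open Scope ring_scope.

Section IBLG.
Variables (R : realType) (m n : nat).
Variables (c : 'I_m -> R) (d : 'I_n -> R) (rmax rmin : R).

Definition strategy_profile (s : 'M[R]_(m, n)) : Prop :=
  forall i : 'I_m, (forall j : 'I_n, 0 <= s i j) /\ \sum_(j < n) s i j <= c i.

Definition rate (j : 'I_n) (s : 'M[R]_(m, n)) : R :=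
  (rmin - rmax) * (\sum_(i < m) s i j) / d j + rmax.

Definition utility (i : 'I_m) (s : 'M[R]_(m, n)) : R :=
  \sum_(j < n) (rate j s - rmin) * s i j.

(* 1-pseudo-gradient, arranged as an m x n matrix: entry (i,j) is
   the partial derivative of u_i w.r.t. s_{ij}. *)
Definition pseudo_gradient (s : 'M[R]_(m, n)) : 'M[R]_(m, n) :=
  \matrix_(i, j) ('D_(delta_mx i j) (utility i) s).

(* Jacobian of g, as an (m*n) x (m*n) matrix, in the flattening mxvec
   (row-major: block i lists the n coordinates of lender i). *)
Definition pseudo_gradient_jacobian (s : 'M[R]_(m, n)) : 'M[R]_(m * n) :=
  \matrix_(p, q)
    ('D_(vec_mx (delta_mx 0 q) : 'M[R]_(m, n))
        (fun t : 'M[R]_(m, n) => mxvec (pseudo_gradient t) 0 p) s).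
End IBLG.

Definition negative_definite (R : realType) (N : nat) (A : 'M[R]_N) : Prop :=
  forall x : 'cV[R]_N, x != 0 -> (x^T *m A *m x) 0 0 < 0.

From mathcomp Require Import all_boot all_order all_algebra.
From mathcomp Require Import all_classical all_reals all_analysis.
From mathcomp Require Import ring.
Import Order.TTheory GRing.Theory Num.Theory.
Import numFieldNormedType.Exports.
Local Open Scope ring_scope.

(* Each utility u_i is a quadratic polynomial in the profile, so g is affine
   and its Jacobian J is constant: the entry at rows (i, j), columns (i', j')
   is [j = j'] (r_min - r_max) / d_j (1 + [i = i']).  J is symmetric, and for
   x = (x_ij) one gets x^T J x = sum_j (r_min - r_max) / d_j
   ((sum_i x_ij)^2 + sum_i x_ij^2), a negatively weighted sum of squares. *)

Local Open Scope classical_set_scope.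

Lemma derive_quadratic_along (R : realType) (V : normedModType R) (f : V -> R)
    (a v : V) (A B : R) :
  (forall h : R, f (h *: v + a) = f a + h * A + h ^+ 2 * B) -> 'D_v f a = A.
Proof.
move=> f_along; rewrite /derive; apply: cvg_lim => //.
have lin_cvg : (fun h : R => A + h * B) x @[x --> (0 : R)^'] --> A.
  rewrite -[X in _ --> X]addr0; apply: cvgD; first exact: cvg_cst.
  rewrite -[X in _ --> X](mul0r B); apply: cvgMr_tmp.
  exact: cvg_within_filter (@cvg_id _ (nbhs (0 : R))).
apply: cvg_trans lin_cvg; apply: near_eq_cvg; near=> h.
have h_neq0 : h != 0 by near: h; exact: nbhs_dnbhs_neq.
by rewrite /= f_along /GRing.scale /=; field.
Unshelve. all: by end_near.
Qed.

Local Close Scope classical_set_scope.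

Section InterbankLending.
Variables (R : realType) (m n : nat) (d : 'I_n -> R) (rmax rmin : R).
Hypothesis d_neq0 : forall j, d j != 0.

Definition borrowed (t : 'M[R]_(m, n)) j := \sum_(i < m) t i j.

Definition utility_derivative i (a v : 'M[R]_(m, n)) :=
  \sum_(j < n) ((rate d rmax rmin j a - rmin) * v i j
                + (rmin - rmax) * borrowed v j / d j * a i j).

Definition utility_hessian i (w v : 'M[R]_(m, n)) :=
  \sum_(j < n) (rmin - rmax) / d j * (borrowed w j * v i j + borrowed v j * w i j).

Lemma borrowed_along h v a j :
  borrowed (h *: v + a) j = h * borrowed v j + borrowed a j.
Proof. by rewrite /borrowed mulr_sumr -big_split; apply: eq_bigr => i _; rewrite !mxE. Qed.

Lemma borrowed_delta i0 j0 j :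
  borrowed (delta_mx i0 j0 : 'M[R]_(m, n)) j = (j == j0)%:R.
Proof.
rewrite /borrowed (bigD1 i0) //= big1 ?addr0 => [|i /negPf i_neq].
  by rewrite mxE eqxx.
by rewrite mxE i_neq.
Qed.

Lemma utility_along i a v h :
  utility d rmax rmin i (h *: v + a)
  = utility d rmax rmin i a + h * utility_derivative i a v
    + h ^+ 2 * \sum_(j < n) (rmin - rmax) * borrowed v j / d j * v i j.
Proof.
rewrite /utility /utility_derivative !mulr_sumr -!big_split; apply: eq_bigr => j _ /=.
rewrite /rate -!/(borrowed _ j) borrowed_along !mxE.
by have := d_neq0 j => dj_neq0; field.
Qed.

Lemma derive_utility i a v : 'D_v (utility d rmax rmin i) a = utility_derivative i a v.
Proof. exact/derive_quadratic_along/utility_along. Qed.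

Lemma utility_derivative_along i a w v h :
  utility_derivative i (h *: w + a) v = utility_derivative i a v + h * utility_hessian i w v.
Proof.
rewrite /utility_derivative /utility_hessian mulr_sumr -big_split; apply: eq_bigr => j _ /=.
rewrite /rate -!/(borrowed _ j) borrowed_along !mxE.
by have := d_neq0 j => dj_neq0; field.
Qed.

Lemma jacobian_mxvec_index (a : 'M[R]_(m, n)) i j i' j' :
  pseudo_gradient_jacobian d rmax rmin a (mxvec_index i j) (mxvec_index i' j')
  = (j == j')%:R * ((rmin - rmax) / d j) * (1 + (i == i')%:R).
Proof.
have -> : pseudo_gradient_jacobian d rmax rmin a (mxvec_index i j) (mxvec_index i' j')
          = utility_hessian i (delta_mx i' j') (delta_mx i j).
  rewrite mxE vec_mx_delta.
  under eq_fun => t do rewrite mxvecE mxE derive_utility.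
  apply: (@derive_quadratic_along _ _ _ _ _ _ 0) => h.
  by rewrite utility_derivative_along mulr0 addr0.
rewrite /utility_hessian (bigD1 j) //= big1 ?addr0 => [|l /negPf l_neq]; last first.
  by rewrite !borrowed_delta !mxE l_neq andbF /= !(mul0r, mulr0, addr0).
rewrite !borrowed_delta !mxE !eqxx.
by case: (j == j'); case: (i == i'); rewrite /= ?andbT ?andbF; ring.
Qed.

Lemma tr_pseudo_gradient_jacobian (a : 'M[R]_(m, n)) :
  (pseudo_gradient_jacobian d rmax rmin a)^T = pseudo_gradient_jacobian d rmax rmin a.
Proof.
apply/matrixP => p q; rewrite mxE.
case/mxvec_indexP: p => i j; case/mxvec_indexP: q => i' j'.
rewrite !jacobian_mxvec_index (eq_sym j' j) (eq_sym i' i).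
by case: eqP => [->|]; rewrite ?mul0r.
Qed.

End InterbankLending.

Lemma sum_mxvec_index (V : nmodType) m n (F : 'I_(m * n) -> V) :
  \sum_p F p = \sum_(i < m) \sum_(j < n) F (mxvec_index i j).
Proof.
by rewrite (reindex _ (curry_mxvec_bij _ _)) pair_bigA; apply: eq_bigr => -[].
Qed.

Lemma quad_form_mxvec (R : comPzRingType) m n (A : 'M[R]_(m * n)) (x : 'cV_(m * n)) :
  let X := vec_mx x^T in
  (x^T *m A *m x) 0 0 = \sum_(i < m) \sum_(j < n) \sum_(i' < m) \sum_(j' < n)
                          X i j * A (mxvec_index i j) (mxvec_index i' j') * X i' j'.
Proof.
rewrite /= -mulmxA mxE sum_mxvec_index; apply: eq_bigr => i _; apply: eq_bigr => j _.
rewrite !mxE sum_mxvec_index mulr_sumr; apply: eq_bigr => i' _.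
rewrite mulr_sumr; apply: eq_bigr => j' _.
by rewrite !mxE mulrA.
Qed.

Lemma sum_lending_form (R : comPzRingType) m n (X : 'M[R]_(m, n)) (w : 'I_n -> R) :
  \sum_(i < m) \sum_(j < n) \sum_(i' < m) \sum_(j' < n)
     X i j * ((j == j')%:R * w j * (1 + (i == i')%:R)) * X i' j'
  = \sum_(j < n) w j * ((\sum_(i < m) X i j) ^+ 2 + \sum_(i < m) X i j ^+ 2).
Proof.
have sum_j' i j i' :
    \sum_(j' < n) X i j * ((j == j')%:R * w j * (1 + (i == i')%:R)) * X i' j'
    = w j * (X i j * X i' j + (i == i')%:R * (X i j * X i' j)).
  rewrite (bigD1 j) //= big1 ?addr0 => [|j' /negPf j_neq]; last first.
    by rewrite eq_sym j_neq !(mul0r, mulr0).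
  by rewrite eqxx mul1r; ring.
have sum_i' i j :
    \sum_(i' < m) w j * (X i j * X i' j + (i == i')%:R * (X i j * X i' j))
    = w j * (X i j * \sum_(i' < m) X i' j + X i j ^+ 2).
  rewrite -mulr_sumr big_split /= -mulr_sumr; congr (_ * (_ + _)).
  rewrite (bigD1 i) //= big1 ?addr0 => [|i' /negPf i_neq]; last by rewrite eq_sym i_neq mul0r.
  by rewrite eqxx mul1r expr2.
rewrite exchange_big; apply: eq_bigr => j _.
under eq_bigr => i _ do under eq_bigr => i' _ do rewrite sum_j'.
under eq_bigr => i _ do rewrite sum_i'.
by rewrite -mulr_sumr big_split /= -mulr_suml expr2.
Qed.

Lemma weighted_sqr_sum_lt0 (R : realDomainType) m n (X : 'M[R]_(m, n)) (w : 'I_n -> R) :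
  (forall j, w j < 0) -> X != 0 ->
  \sum_(j < n) w j * ((\sum_(i < m) X i j) ^+ 2 + \sum_(i < m) X i j ^+ 2) < 0.
Proof.
move=> w_lt0 /matrix0Pn[i0 [j0 X_neq0]].
have sqr_sum_ge0 j : 0 <= \sum_(i < m) X i j ^+ 2 by apply: sumr_ge0 => i _; apply: sqr_ge0.
have term_j0_lt0 : w j0 * ((\sum_(i < m) X i j0) ^+ 2 + \sum_(i < m) X i j0 ^+ 2) < 0.
  rewrite nmulr_rlt0 // ltr_wpDl ?sqr_ge0 // (bigD1 i0) //= ltr_wpDr //.
    by apply: sumr_ge0 => i _; apply: sqr_ge0.
  by rewrite exprn_even_gt0 ?X_neq0 ?orbT.
have others_le0 : \sum_(j < n | j != j0) w j * ((\sum_(i < m) X i j) ^+ 2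
                                               + \sum_(i < m) X i j ^+ 2) <= 0.
  by apply: sumr_le0 => j _; rewrite nmulr_rle0 // addr_ge0 ?sqr_ge0 ?sqr_sum_ge0.
by rewrite (bigD1 j0) //=; apply: ltr_wnDr others_le0 term_j0_lt0.
Qed.

Theorem proposition4p7 (R : realType) (m n : nat) (c : 'I_m -> R) (d : 'I_n -> R)
  (rmax rmin : R) (m_pos : (0 < m)%N) (n_pos : (0 < n)%N)
  (c_pos : forall i, 0 < c i) (d_pos : forall j, 0 < d j)
  (rmin_pos : 0 < rmin) (rmin_lt_rmax : rmin < rmax)
  (s : 'M[R]_(m, n)) (hs : strategy_profile c s) :
  negative_definite
    (pseudo_gradient_jacobian d rmax rmin s
     + (pseudo_gradient_jacobian d rmax rmin s)^T).
Proof.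
move=> x x_neq0.
have d_neq0 j : d j != 0 by rewrite gt_eqF.
have w_lt0 j : (rmin - rmax) / d j < 0 by rewrite pmulr_llt0 ?invr_gt0 // subr_lt0.
have X_neq0 : vec_mx x^T != 0 by rewrite vec_mx_eq0 trmx_eq0.
have form_lt0 : (x^T *m pseudo_gradient_jacobian d rmax rmin s *m x) 0 0 < 0.
  rewrite quad_form_mxvec.
  under eq_bigr => i _ do under eq_bigr => j _ do under eq_bigr => i' _ do
    under eq_bigr => j' _ do rewrite jacobian_mxvec_index //.
  by rewrite sum_lending_form; apply: weighted_sqr_sum_lt0.
by rewrite tr_pseudo_gradient_jacobian // mulmxDr mulmxDl mxE -mulr2n pmulrn_llt0.
Qed.
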